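(* Let $R$ be a ring in which the set $\operatorname{Nil}(R)$ of nilpotent elements is a subring. Then every idempotent of the factor ring $R/\operatorname{Nil}^*(R)$ is central in $R/\operatorname{Nil}^*(R)$.
   Context: Rings are associative and not necessarily unital. $\operatorname{Nil}^*(R)$ denotes the upper nilradical of $R$, i.e. the sum of all nil two-sided ideals of $R$. *)

(* Rings here are associative but NOT necessarily unital,
   so a ring is given as an additive group (zmodType) together with an
   associative, bi-distributive multiplication. *)
From HB Require Import structures.
From mathcomp Require Import all_boot all_order all_algebra.
Set Implicit Arguments. Unset Strict Implicit. Unset Printing Implicit Defensive.
Import GRing.Theory.
Local Open Scope ring_scope.

Record is_rng (R : zmodType) (mul : R -> R -> R) : Prop := IsRng {
  rng_mulA : associative mul;
  rng_mulDl : left_distributive mul +%R;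
  rng_mulDr : right_distributive mul +%R
}.

Section Rng.
Variables (R : zmodType) (mul : R -> R -> R).

(* rpow x n = x^(n+1) (positive powers only; no unit). *)
Fixpoint rpow (x : R) (n : nat) : R :=
  match n with 0 => x | n'.+1 => mul x (rpow x n') end.

Definition nilpotent (x : R) : Prop := exists n : nat, rpow x n = 0.

Definition is_subring (S : R -> Prop) : Prop :=
  [/\ S 0, (forall a b, S a -> S b -> S (a - b)) &
      (forall a b, S a -> S b -> S (mul a b))].

Definition is_ideal (I : R -> Prop) : Prop :=
  [/\ I 0, (forall a b, I a -> I b -> I (a - b)),
      (forall r a, I a -> I (mul r a)) &
      (forall r a, I a -> I (mul a r))].

Definition nil_ideal (I : R -> Prop) : Prop :=
  is_ideal I /\ forall a, I a -> nilpotent a.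

(* Nil^*(R): the sum of all nil two-sided ideals, i.e. the set of finite
   sums of elements each lying in some nil ideal. *)
Definition upper_nilradical (x : R) : Prop :=
  exists s : seq R,
    (forall a, a \in s -> exists I, nil_ideal I /\ I a) /\
    x = \sum_(a <- s) a.

End Rng.

From mathcomp Require Import all_boot all_order all_algebra.
From Stdlib Require Import Setoid Morphisms.
Set Implicit Arguments. Unset Strict Implicit. Unset Printing Implicit Defensive.
Import GRing.Theory.
Local Open Scope ring_scope.

(* When the nilpotent elements form a subring, Nil^*(R) is the set J of those
   z with R^1 z R^1 nilpotent.  Let e be idempotent modulo J.  The Peirce
   corners e w (1 - e) and (1 - e) w e square to 0 modulo J, so they are
   nilpotent; every one-sided multiple of e w (1 - e) is, modulo J, a sum of
   products of such corners, hence nilpotent, so e w (1 - e) lies in J, and by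
   passing to the opposite ring so does (1 - e) w e.  Finally
   e w - w e = e w (1 - e) - (1 - e) w e. *)

Section Powers.
Variables (R : zmodType) (mul : R -> R -> R).
Hypothesis mulA : associative mul.

Lemma rpowD x n k : mul (rpow mul x n) (rpow mul x k) = rpow mul x (n + k).+1.
Proof. by elim: n => [|n IHn] //=; rewrite -mulA IHn. Qed.

Lemma rpow_sqr x n : rpow mul (mul x x) n = rpow mul x (n.*2).+1.
Proof. by elim: n => [|n IHn] //=; rewrite IHn -mulA. Qed.

Lemma nilpotent_sqr x : nilpotent mul (mul x x) -> nilpotent mul x.
Proof. by case=> n xxn0; exists (n.*2).+1; rewrite -rpow_sqr. Qed.

End Powers.

Section Rng.
Variables (R : zmodType) (mul : R -> R -> R).
Hypothesis rngR : is_rng mul.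

Let mulA : associative mul := rng_mulA rngR.
Let mulDl : left_distributive mul +%R := rng_mulDl rngR.
Let mulDr : right_distributive mul +%R := rng_mulDr rngR.

Lemma rng_mul0r a : mul 0 a = 0.
Proof. by apply: (addrI (mul 0 a)); rewrite -mulDl !addr0. Qed.

Lemma rng_mulr0 a : mul a 0 = 0.
Proof. by apply: (addrI (mul a 0)); rewrite -mulDr !addr0. Qed.

Lemma rng_mulNr a b : mul (- a) b = - mul a b.
Proof. by apply/eqP; rewrite -addr_eq0 -mulDl addNr rng_mul0r. Qed.

Lemma rng_mulrN a b : mul a (- b) = - mul a b.
Proof. by apply/eqP; rewrite -addr_eq0 -mulDr addNr rng_mulr0. Qed.

Lemma rng_mulrBl a b c : mul (a - b) c = mul a c - mul b c.
Proof. by rewrite mulDl rng_mulNr. Qed.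

Lemma rng_mulrBr a b c : mul c (a - b) = mul c a - mul c b.
Proof. by rewrite mulDr rng_mulrN. Qed.

Hypothesis nil_subring : is_subring mul (nilpotent mul).

Lemma nilpotent0 : nilpotent mul 0.
Proof. by case: nil_subring. Qed.

Lemma nilpotentB a b : nilpotent mul a -> nilpotent mul b -> nilpotent mul (a - b).
Proof. by case: nil_subring => _ nilB _; apply: nilB. Qed.

Lemma nilpotentM a b :
  nilpotent mul a -> nilpotent mul b -> nilpotent mul (mul a b).
Proof. by case: nil_subring => _ _ nilM; apply: nilM. Qed.

Lemma nilpotentD a b : nilpotent mul a -> nilpotent mul b -> nilpotent mul (a + b).
Proof.
move=> nil_a nil_b; rewrite -[b]opprK -[- b]sub0r.
by apply: nilpotentB => //; apply: nilpotentB => //; apply: nilpotent0.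
Qed.

(* With R^1 the unitization of R, nil_core z means that R^1 z R^1 consists of
   nilpotent elements. *)
Definition nil_core (z : R) : Prop :=
  [/\ nilpotent mul z, (forall r, nilpotent mul (mul r z)),
      (forall s, nilpotent mul (mul z s)) &
      (forall r s, nilpotent mul (mul (mul r z) s))].

Lemma nil_core_nilpotent z : nil_core z -> nilpotent mul z.
Proof. by case. Qed.

Lemma nil_core0 : nil_core 0.
Proof. by split=> *; rewrite ?rng_mul0r ?rng_mulr0 ?rng_mul0r; apply: nilpotent0. Qed.

Lemma nil_coreB a b : nil_core a -> nil_core b -> nil_core (a - b).
Proof.
case=> a1 a2 a3 a4 [b1 b2 b3 b4].
by split=> *; rewrite ?rng_mulrBl ?rng_mulrBr ?rng_mulrBl; apply: nilpotentB.
Qed.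

Lemma nil_coreN a : nil_core a -> nil_core (- a).
Proof. by move=> Ja; rewrite -sub0r; apply: nil_coreB => //; apply: nil_core0. Qed.

Lemma nil_coreD a b : nil_core a -> nil_core b -> nil_core (a + b).
Proof. by move=> Ja Jb; rewrite -[b]opprK; apply: nil_coreB => //; apply: nil_coreN. Qed.

Lemma nil_coreMl r a : nil_core a -> nil_core (mul r a).
Proof. by case=> a1 a2 a3 a4; split=> // *; rewrite mulA. Qed.

Lemma nil_coreMr r a : nil_core a -> nil_core (mul a r).
Proof.
case=> a1 a2 a3 a4; split=> //; first by move=> t; rewrite mulA.
  by move=> s; rewrite -mulA.
by move=> t s; rewrite -!mulA mulA.
Qed.

Lemma nil_ideal_nil_core : nil_ideal mul nil_core.
Proof.
split; last exact: nil_core_nilpotent.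
by split; [exact: nil_core0 | exact: nil_coreB | exact: nil_coreMl | exact: nil_coreMr].
Qed.

Lemma nil_ideal_sub_nil_core I z : nil_ideal mul I -> I z -> nil_core z.
Proof.
case=> -[_ _ IMl IMr] I_nil Iz.
by split=> [|r|s|r s]; apply: I_nil; [| apply: IMl | apply: IMr | apply/IMr/IMl].
Qed.

Lemma upper_nilradicalE z : upper_nilradical mul z <-> nil_core z.
Proof.
split; last first.
  move=> Jz; exists [:: z]; split; last by rewrite big_seq1.
  by move=> a; rewrite inE => /eqP ->; exists nil_core; split; [exact: nil_ideal_nil_core | exact: Jz].
case=> s [s_nil ->]; elim: s s_nil => [|a s IHs] s_nil.
  by rewrite big_nil; apply: nil_core0.
rewrite big_cons; apply: nil_coreD.
  by have [I [nil_I Ia]] := s_nil a (mem_head a s); exact: nil_ideal_sub_nil_core Ia.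
by apply: IHs => b sb; apply: s_nil; rewrite in_cons sb orbT.
Qed.

Definition core_congr a b := nil_core (a - b).

Instance core_congr_equiv : Equivalence core_congr.
Proof.
split.
- by move=> a; rewrite /core_congr subrr; apply: nil_core0.
- by move=> a b Jab; rewrite /core_congr -opprB; apply: nil_coreN.
- by move=> a b c Jab Jbc; rewrite /core_congr -[a](subrK b) -addrA; apply: nil_coreD.
Qed.

Instance mul_core_congr : Proper (core_congr ==> core_congr ==> core_congr) mul.
Proof.
move=> a a' Ja b b' Jb; rewrite /core_congr.
have -> : mul a b - mul a' b' = mul (a - a') b + mul a' (b - b').
  by rewrite rng_mulrBl rng_mulrBr addrA subrK.
by apply: nil_coreD; [apply: nil_coreMr | apply: nil_coreMl].
Qed.

Instance add_core_congr : Proper (core_congr ==> core_congr ==> core_congr) +%R.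
Proof.
move=> a a' Ja b b' Jb; rewrite /core_congr.
by rewrite opprD addrACA; apply: nil_coreD.
Qed.

Instance opp_core_congr : Proper (core_congr ==> core_congr) (@GRing.opp R).
Proof. by move=> a a' Ja; rewrite /core_congr -opprD; apply: nil_coreN. Qed.

Lemma core_congr_eq a b : a = b -> core_congr a b.
Proof. by move=> ->; reflexivity. Qed.

Lemma core_congr_nilpotent z z' :
  core_congr z z' -> nilpotent mul z' -> nilpotent mul z.
Proof.
move=> Jzz' nil_z'; rewrite -[z](subrK z') addrC.
by apply: nilpotentD => //; apply: nil_core_nilpotent.
Qed.

Lemma core_congr_nilpotent0 z : core_congr z 0 -> nilpotent mul z.
Proof. by move/core_congr_nilpotent; apply; apply: nilpotent0. Qed.

Section Idempotent.
Variable e : R.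
Hypothesis e_idem : nil_core (mul e e - e).

Let mulee : core_congr (mul e e) e.
Proof. exact: e_idem. Qed.

Let mulee_r a : core_congr (mul (mul a e) e) (mul a e).
Proof. by rewrite -mulA; setoid_rewrite mulee; reflexivity. Qed.

(* The Peirce corners e w (1 - e) and (1 - e) w e, written without a unit. *)
Definition peirce01 w := mul e w - mul (mul e w) e.
Definition peirce10 w := mul w e - mul e (mul w e).

Ltac core_normalize :=
  rewrite /peirce01 /peirce10;
  repeat (rewrite rng_mulrBl || rewrite rng_mulrBr || rewrite mulDl ||
          rewrite mulDr || rewrite rng_mulNr || rewrite rng_mulrN || rewrite mulA);
  repeat (setoid_rewrite mulee_r || setoid_rewrite mulee);
  apply: core_congr_eq.

Lemma peirce01_sqr w : core_congr (mul (peirce01 w) (peirce01 w)) 0.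
Proof. by core_normalize; rewrite subrr. Qed.

Lemma peirce10_sqr w : core_congr (mul (peirce10 w) (peirce10 w)) 0.
Proof. by core_normalize; rewrite !subrr. Qed.

Lemma nilpotent_peirce01 w : nilpotent mul (peirce01 w).
Proof. by apply: (nilpotent_sqr mulA); apply: core_congr_nilpotent0; apply: peirce01_sqr. Qed.

Lemma nilpotent_peirce10 w : nilpotent mul (peirce10 w).
Proof. by apply: (nilpotent_sqr mulA); apply: core_congr_nilpotent0; apply: peirce10_sqr. Qed.

Lemma peirce01_mulr w s : core_congr (mul (peirce01 w) s)
  (mul (peirce01 w) (peirce10 s) + peirce01 (mul w s - mul (mul w e) s)).
Proof.
by core_normalize; rewrite subrr subr0 [_ + (_ - _ - _)]addrC subrK.
Qed.

Lemma peirce01_mull r w : core_congr (mul r (peirce01 w))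
  (mul (peirce10 r) (peirce01 w) + peirce01 (mul (mul r e) w)).
Proof. by core_normalize; rewrite subrK. Qed.

Lemma nilpotent_peirce01_mulr w s : nilpotent mul (mul (peirce01 w) s).
Proof.
apply: core_congr_nilpotent (peirce01_mulr w s) _.
apply: nilpotentD; last exact: nilpotent_peirce01.
by apply: nilpotentM; [exact: nilpotent_peirce01 | exact: nilpotent_peirce10].
Qed.

Lemma nil_core_peirce01 w : nil_core (peirce01 w).
Proof.
split; [exact: nilpotent_peirce01 | | exact: nilpotent_peirce01_mulr | ].
  move=> r; apply: core_congr_nilpotent (peirce01_mull r w) _.
  apply: nilpotentD; last exact: nilpotent_peirce01.
  by apply: nilpotentM; [exact: nilpotent_peirce10 | exact: nilpotent_peirce01].
move=> r s.
have rws : core_congr (mul (mul r (peirce01 w)) s)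
    (mul (peirce10 r) (mul (peirce01 w) s) + mul (peirce01 (mul (mul r e) w)) s).
  by rewrite (peirce01_mull r w) mulDl mulA; reflexivity.
apply: core_congr_nilpotent rws _.
apply: nilpotentD; last exact: nilpotent_peirce01_mulr.
by apply: nilpotentM; [exact: nilpotent_peirce10 | exact: nilpotent_peirce01_mulr].
Qed.

End Idempotent.
End Rng.

Section Opposite.
Variables (R : zmodType) (mul : R -> R -> R).

Definition mul_op (a b : R) := mul b a.

Lemma is_rng_op : is_rng mul -> is_rng mul_op.
Proof.
case=> mulA mulDl mulDr; split=> [a b c | a b c | a b c];
  by rewrite /mul_op ?mulA ?mulDl ?mulDr.
Qed.

Hypothesis mulA : associative mul.

Lemma rpow_op x n : rpow mul_op x n = rpow mul x n.
Proof.
elim: n => [|n IHn] //=; rewrite /mul_op IHn.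
by have := rpowD mulA x n 0; rewrite addn0 => ->.
Qed.

Lemma nilpotent_op x : nilpotent mul_op x <-> nilpotent mul x.
Proof. by split=> -[n xn0]; exists n; rewrite ?rpow_op // -rpow_op. Qed.

Lemma is_subring_nilpotent_op :
  is_subring mul (nilpotent mul) -> is_subring mul_op (nilpotent mul_op).
Proof.
case=> nil0 nilB nilM; split; first exact/nilpotent_op.
  by move=> a b /nilpotent_op nil_a /nilpotent_op nil_b; apply/nilpotent_op; apply: nilB.
by move=> a b /nilpotent_op nil_a /nilpotent_op nil_b; apply/nilpotent_op; apply: nilM.
Qed.

Lemma nil_core_op z : nil_core mul_op z <-> nil_core mul z.
Proof.
split=> -[z1 z2 z3 z4]; split=> [|r|s|r s]; apply/nilpotent_op.
- exact: z1.
- exact: z3.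
- exact: z2.
- by rewrite -mulA; apply: z4.
- exact: z1.
- exact: z3.
- exact: z2.
- by rewrite /mul_op mulA; apply: z4.
Qed.

End Opposite.

Lemma nil_core_peirce10 (R : zmodType) (mul : R -> R -> R) e w :
  is_rng mul -> is_subring mul (nilpotent mul) -> nil_core mul (mul e e - e) ->
  nil_core mul (peirce10 mul e w).
Proof.
move=> rngR nil_subring e_idem; have mulA := rng_mulA rngR.
(* peirce10 mul e w is convertible to peirce01 (mul_op mul) e w. *)
apply/(nil_core_op mulA).
apply: (nil_core_peirce01 (is_rng_op rngR) (is_subring_nilpotent_op mulA nil_subring)).
exact/(nil_core_op mulA).
Qed.

Theorem proposition3p1 (R : zmodType) (mul : R -> R -> R) :
  is_rng mul ->
  is_subring mul (nilpotent mul) ->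
  forall x : R, upper_nilradical mul (mul x x - x) ->
  forall y : R, upper_nilradical mul (mul x y - mul y x).
Proof.
move=> rngR nil_subring x /(upper_nilradicalE rngR nil_subring) x_idem y.
apply/(upper_nilradicalE rngR nil_subring).
have -> : mul x y - mul y x = peirce01 mul x y - peirce10 mul x y.
  by rewrite /peirce01 /peirce10 (rng_mulA rngR) opprB addrA subrK.
apply: nil_coreB => //.
  exact: nil_core_peirce01.
exact: nil_core_peirce10.
Qed.
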